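(* Let $n\ge1$ and let $q$ be an integer coprime to $n$. (a) The linking form $(q/n)$ on $\mathbb Z_n$ is simple if and only if $q$ is congruent modulo $n$ to plus or minus a quadratic residue mod $n$ (i.e. $q\equiv\pm k^2 \pmod n$ for some integer $k$). (b) The linking form $(q/n)$ on $\mathbb Z_n$ is semisimple if and only if there is a factorization $n=n_1\cdots n_k$ with the $n_i$ pairwise relatively prime such that each form $(q_i/n_i)$ is simple, where $q_i=qn/n_i$.
   Context: For $n\ge1$ and $q$ coprime to $n$, $(q/n)$ denotes the nondegenerate symmetric linking form on $\mathbb Z_n$ with values in $\mathbb Q/\mathbb Z$ whose value on a generator paired with itself is $q/n$; $(q/n)\cong(q'/n)$ iff $q'\equiv k^2q \pmod n$ for some $k$ coprime to $n$. A linking form is simple if it is isomorphic to $(\pm1/m)$ for some $m\ge1$ (including the trivial form on $\mathbb Z_1=0$), and semisimple if it is isomorphic to an orthogonal direct sum of simple forms. *)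

From HB Require Import structures.
From mathcomp Require Import all_boot all_order all_algebra.
Set Implicit Arguments. Unset Strict Implicit. Unset Printing Implicit Defensive.
Import Order.TTheory GRing.Theory Num.Theory.
Local Open Scope ring_scope.

(* Values in Q/Z are represented by rationals, compared modulo integers. *)
Definition qz_eq (x y : rat) : Prop := (x - y) \is a Num.int.

Definition lform (G : zmodType) := G -> G -> rat.

Definition form_iso (G H : zmodType) (b : lform G) (c : lform H) : Prop :=
  exists f : G -> H,
    {morph f : x y / x + y} /\ bijective f /\
    forall x y, qz_eq (c (f x) (f y)) (b x y).

(* The cyclic group Z_n for n >= 1 (for n >= 1, n.-1.+1 = n). *)
Definition Zn (n : nat) : zmodType := 'I_(n.-1).+1.

Definition cform (n : nat) (q : int) : lform (Zn n) :=
  fun x y => q%:~R * (nat_of_ord x)%:R * (nat_of_ord y)%:R / n%:R.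

Arguments cform : clear implicits.

Definition osum (G H : zmodType) (b : lform G) (c : lform H) : lform (G * H)%type :=
  fun x y => b x.1 y.1 + c x.2 y.2.

(* Simple: isomorphic to (1/m) or (-1/m) for some m >= 1 (m = 1 gives the
   trivial form on Z_1 = 0). *)
Definition simple_form (G : zmodType) (b : lform G) : Prop :=
  exists (m : nat) (e : int), (0 < m)%N /\ (e = 1 \/ e = -1) /\
    form_iso b (cform m e).

(* Semisimple: isomorphic to an orthogonal direct sum of finitely many
   simple forms (the empty sum being the trivial form on 0 = Z_1). *)
Inductive semisimple_form : forall G : zmodType, lform G -> Prop :=
| ss_nil (G : zmodType) (b : lform G) :
    form_iso b (cform 1 1) -> semisimple_form b
| ss_cons (G H1 H2 : zmodType) (b : lform G) (c1 : lform H1) (c2 : lform H2) :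
    simple_form c1 -> semisimple_form c2 -> form_iso b (osum c1 c2) ->
    semisimple_form b.

From HB Require Import structures.
From mathcomp Require Import all_boot all_order all_algebra.
From mathcomp Require Import ring.
Import Order.TTheory GRing.Theory Num.Theory.
Set Implicit Arguments. Unset Strict Implicit. Unset Printing Implicit Defensive.
Local Open Scope ring_scope.

(* (a) An isometry (q/n) ~ (e/n), e = +-1, is multiplication by some k on Z_n, so
   q = e k^2 (mod n); conversely multiplication by a unit k carries (e k^2/n) to (e/n).
   (b) For coprime n1, n2 the map (a, b) |-> a n2 + b n1 is an isometry
   (q n2/n1) + (q n1/n2) ~ (q/(n1 n2)), so a factorization with simple factors gives a
   semisimple form.  Conversely, if (q/n) ~ (+-1/m) + c on Z_m x H, then Z_m x H is
   cyclic of order n, which forces n = m n' with gcd(m, n') = 1; the form on the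
   preimage of the generator of Z_m shows that (q n'/m) is simple, and on m Z_n, which
   is mapped onto 0 x H, it shows (q m/n') ~ c.  Induction on the number of simple
   summands gives the factorization. *)

(** * Values in Q/Z and isometries *)

Lemma qz_refl x : qz_eq x x.
Proof. by rewrite /qz_eq subrr. Qed.

Lemma qz_sym x y : qz_eq x y -> qz_eq y x.
Proof. by rewrite /qz_eq -opprB rpredN. Qed.

Lemma qz_trans x y z : qz_eq x y -> qz_eq y z -> qz_eq x z.
Proof. by rewrite /qz_eq => hxy hyz; rewrite -[x](subrK y) -addrA rpredD. Qed.

Lemma qz_add x y x' y' : qz_eq x x' -> qz_eq y y' -> qz_eq (x + y) (x' + y').
Proof. by rewrite /qz_eq opprD addrACA; apply: rpredD. Qed.

Lemma qz_addr_cancel x y c : qz_eq (x + c) y -> qz_eq c 0 -> qz_eq x y.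
Proof.
rewrite /qz_eq subr0 => hxy hc.
have -> : x - y = x + c - y - c by rewrite addrAC addrK.
exact: rpredB.
Qed.

Lemma qz_eq_frac (n : nat) (a b : int) : (0 < n)%N ->
  qz_eq (a%:~R / n%:R) (b%:~R / n%:R) <-> (a = b %[mod n%:Z])%Z.
Proof.
move=> n_gt0; rewrite /qz_eq -mulrBl -rmorphB /=; split; last first.
  by move/eqP; rewrite eqz_mod_dvd => /Qint_dvdz.
have n_neq0 : (n%:R : rat) != 0 by rewrite pnatr_eq0 -lt0n.
case/intrP=> z hz; apply/eqP; rewrite eqz_mod_dvd; apply/dvdzP; exists z.
apply: (@intr_inj rat).
by rewrite rmorphM /= -hz -[(n%:Z)%:~R]/(n%:R : rat) divfK.
Qed.

Lemma cformE n q (x y : Zn n) :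
  cform n q x y = (q * (nat_of_ord x)%:Z * (nat_of_ord y)%:Z)%:~R / n%:R.
Proof. by rewrite /cform !rmorphM. Qed.

Lemma cform0l n q (y : Zn n) : cform n q 0 y = 0.
Proof. by rewrite /cform mulr0 !mul0r. Qed.

Lemma cform_scale (m d : nat) (x : int) : (0 < d)%N ->
  (x * d%:Z)%:~R / (m * d)%:R = x%:~R / m%:R :> rat.
Proof.
move=> d_gt0; have d_neq0 : (d%:R : rat) != 0 by rewrite pnatr_eq0 -lt0n.
by rewrite rmorphM natrM /= -mulf_div divff // mulr1.
Qed.

Lemma iso_refl (G : zmodType) (b : lform G) : form_iso b b.
Proof.
by exists id; split=> //; split; [exists id | move=> x y; apply: qz_refl].
Qed.

Lemma iso_trans (G H K : zmodType) (b : lform G) (c : lform H) (d : lform K) :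
  form_iso b c -> form_iso c d -> form_iso b d.
Proof.
move=> [f [fD [f_bij f_iso]]] [g [gD [g_bij g_iso]]].
exists (g \o f); split; first by move=> x y /=; rewrite fD gD.
by split; [apply: bij_comp | move=> x y; apply: qz_trans (g_iso _ _) (f_iso _ _)].
Qed.

Lemma iso_sym (G H : zmodType) (b : lform G) (c : lform H) :
  form_iso b c -> form_iso c b.
Proof.
move=> [f [fD [[g fK gK] f_iso]]]; exists g; split.
  by move=> x y; apply: (can_inj fK); rewrite fD !gK.
split; first by exists f.
by move=> x y; have := f_iso (g x) (g y); rewrite !gK; apply: qz_sym.
Qed.

Lemma iso_osum (G1 G2 H1 H2 : zmodType) (b1 : lform G1) (b2 : lform G2)
  (c1 : lform H1) (c2 : lform H2) :
  form_iso b1 c1 -> form_iso b2 c2 -> form_iso (osum b1 b2) (osum c1 c2).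
Proof.
move=> [f [fD [[f' fK f'K] f_iso]]] [g [gD [[g' gK g'K] g_iso]]].
exists (fun x => (f x.1, g x.2)); split; first by move=> [? ?] [? ?]; rewrite /= fD gD.
split; last by move=> [? ?] [? ?]; apply: qz_add; [apply: f_iso | apply: g_iso].
by exists (fun x => (f' x.1, g' x.2)) => [[? ?]|[? ?]]; rewrite /= ?fK ?gK ?f'K ?g'K.
Qed.

Lemma semisimple_iso (G H : zmodType) (b : lform G) (c : lform H) :
  form_iso b c -> semisimple_form c -> semisimple_form b.
Proof.
move=> bc sc; case: sc bc => [G' b' h | G' H1 H2 b' c1 c2 s1 s2 h] bc.
  by apply: ss_nil; apply: iso_trans bc h.
by apply: (ss_cons s1 s2); apply: iso_trans bc h.
Qed.

(** * The cyclic groups Z_n *)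

Lemma morph_add0 (G H : zmodType) (f : G -> H) : {morph f : x y / x + y} -> f 0 = 0.
Proof. by move=> fD; apply: (addrI (f 0)); rewrite -fD !addr0. Qed.

Section CyclicGroups.

Variable n : nat.
Hypothesis n_gt0 : (0 < n)%N.

Lemma card_Zn : #|{: Zn n}| = n.
Proof. by rewrite card_ord prednK. Qed.

Lemma ltn_Zn (x : Zn n) : (x < n)%N.
Proof. by rewrite -[n in (_ < n)%N]prednK. Qed.

Lemma val_inZp k : nat_of_ord (inZp k : Zn n) = (k %% n)%N.
Proof. by rewrite /= prednK. Qed.

Lemma val_addZn (x y : Zn n) : nat_of_ord (x + y) = ((x + y) %% n)%N.
Proof. by case: n n_gt0 x y. Qed.

Lemma val_mulrnZn (x : Zn n) k : nat_of_ord (x *+ k) = ((x * k) %% n)%N.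
Proof. by rewrite Zp_mulrn val_inZp. Qed.

Lemma inZp_eq0 k : ((inZp k : Zn n) == 0) = (n %| k)%N.
Proof. by rewrite -val_eqE /= prednK. Qed.

Lemma inZpn : (inZp n : Zn n) = 0.
Proof. by apply/eqP; rewrite inZp_eq0. Qed.

Lemma additive_Zn (H : zmodType) (f : Zn n -> H) :
  {morph f : x y / x + y} -> forall k, f (inZp k) = f (inZp 1) *+ k.
Proof.
move=> fD; elim=> [|k IHk].
  by rewrite mulr0n -(morph_add0 fD); congr f; apply: val_inj => /=.
by rewrite mulrS -IHk -fD; congr f; apply: val_inj => /=; rewrite modnDm.
Qed.

End CyclicGroups.

Lemma iso_card_Zn n m (b : lform (Zn n)) (c : lform (Zn m)) :
  (0 < n)%N -> (0 < m)%N -> form_iso b c -> n = m.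
Proof.
move=> n_gt0 m_gt0 [f [_ [f_bij _]]].
by rewrite -(card_Zn n_gt0) -(card_Zn m_gt0); apply: bij_eq_card f_bij.
Qed.

Lemma modn_mulr_cancel n k x y : coprime k n ->
  (x * k = y * k %[mod n])%N -> (x = y %[mod n])%N.
Proof.
move=> coprime_kn hxy.
have : ((x * k)%N%:Z == (y * k)%N%:Z %[mod n%:Z])%Z by rewrite !modz_nat hxy.
rewrite eqz_mod_dvd !PoszM -mulrBl Gauss_dvdzl; last first.
  by rewrite coprimezE coprime_sym.
by rewrite -eqz_mod_dvd !modz_nat => /eqP [].
Qed.

Lemma pair_mulrn (G H : zmodType) (p : G * H) k : p *+ k = (p.1 *+ k, p.2 *+ k).
Proof. by elim: k => [|k IHk]; rewrite ?mulr0n // !mulrS IHk. Qed.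


(** * Simple forms *)

Lemma cform_mulrn_iso n k (a b : int) : (0 < n)%N -> coprime k n ->
  (b * k%:Z * k%:Z = a %[mod n%:Z])%Z -> form_iso (cform n a) (cform n b).
Proof.
move=> n_gt0 coprime_kn hab.
exists (fun x => x *+ k); split; first by move=> x y; rewrite mulrnDl.
split.
  apply: injF_bij => x y /(congr1 (@nat_of_ord _)).
  rewrite !val_mulrnZn // => /(modn_mulr_cancel coprime_kn).
  by rewrite !modn_small ?ltn_Zn // => /val_inj.
move=> x y; rewrite !cformE; apply/qz_eq_frac => //.
rewrite !val_mulrnZn // -!modz_nat modzMmr mulrAC modzMmr !PoszM.
rewrite (_ : b * _ * _ = b * k%:Z * k%:Z * x%:Z * y%:Z); last by ring.
by rewrite -mulrA -modzMml hab modzMml mulrA.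
Qed.

Lemma simple_cform m (q e k : int) : (0 < m)%N -> coprimez k m%:Z ->
  (e = 1 \/ e = -1) -> (q = e * k ^+ 2 %[mod m%:Z])%Z -> simple_form (cform m q).
Proof.
move=> m_gt0 coprime_km e_unit hq.
pose r := `|(k %% m%:Z)%Z|%N.
have rE : r%:Z = (k %% m%:Z)%Z by rewrite /r gez0_abs // modz_ge0 // eqz_nat -lt0n.
have : coprimez r%:Z m%:Z by rewrite rE /coprimez gcdz_modl.
rewrite coprimezE => coprime_rm.
exists m, e; do 2!split => //; apply: (cform_mulrn_iso m_gt0 coprime_rm).
by rewrite rE modzMmr mulrAC modzMmr -mulrA -expr2 hq.
Qed.

Lemma simple_cformP n q : (0 < n)%N -> coprimez q n%:Z ->
  (simple_form (cform n q) <->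
     exists k : int, (q = k ^+ 2 %[mod n%:Z])%Z \/ (q = - k ^+ 2 %[mod n%:Z])%Z).
Proof.
move=> n_gt0 coprime_qn; split.
  move=> [m [e [m_gt0 [e_unit iso]]]].
  have /esym eq_mn := iso_card_Zn n_gt0 m_gt0 iso; subst m.
  case: iso => f [_ [_ f_iso]]; exists (f (inZp 1))%:Z.
  have := f_iso (inZp 1) (inZp 1); rewrite !cformE => /(qz_eq_frac _ _ n_gt0).
  rewrite val_inZp // -modz_nat modzMmr mulr1 modzMmr !mulr1 -mulrA -expr2 => <-.
  by case: e_unit => ->; [left | right]; rewrite ?mul1r ?mulN1r.
move=> [k hk].
have [e e_unit hq] : exists2 e : int, e = 1 \/ e = -1 & (q = e * k ^+ 2 %[mod n%:Z])%Z.
  by case: hk => hq; [exists 1; [left | rewrite mul1r] | exists (-1); [right | rewrite mulN1r]].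
apply: (simple_cform n_gt0 _ e_unit hq).
move: coprime_qn; rewrite /coprimez -gcdz_modl hq gcdz_modl.
by rewrite -/(coprimez _ _) coprimezMl expr2 coprimezMl => /and3P [].
Qed.

(** * Orthogonal splittings of (q/n) *)

Lemma cform_crt_iso n1 n2 q : (0 < n1)%N -> (0 < n2)%N -> coprime n1 n2 ->
  form_iso (osum (cform n1 (q * n2%:Z)) (cform n2 (q * n1%:Z))) (cform (n1 * n2) q).
Proof.
move=> n1_gt0 n2_gt0 coprime_n12.
have n12_gt0 : (0 < n1 * n2)%N by rewrite muln_gt0 n1_gt0.
pose g (p : Zn n1 * Zn n2) : Zn (n1 * n2) := inZp (p.1 * n2 + p.2 * n1).
have gE x y : nat_of_ord (g (x, y)) = ((x * n2 + y * n1) %% (n1 * n2))%N.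
  by rewrite val_inZp.
exists g; split.
  move=> [a b] [c d]; apply: val_inj.
  change (nat_of_ord (g (a + c, b + d)) = nat_of_ord (g (a, b) + g (c, d))).
  rewrite val_addZn // !gE !val_addZn //.
  rewrite modnDm !muln_modl [(n2 * n1)%N]mulnC modnDm.
  by congr (_ %% _)%N; ring.
split.
  apply: inj_card_bij; last by rewrite card_prod !card_Zn.
  move=> [a b] [c d] /(congr1 (@nat_of_ord _)); rewrite !gE => /eqP.
  rewrite chinese_remainder // => /andP [/eqP eq1 /eqP eq2].
  move: eq1; rewrite addnC [(c * n2 + _)%N]addnC !modnMDl.
  move=> /(modn_mulr_cancel (_ : coprime n2 n1)); rewrite coprime_sym => /(_ coprime_n12).
  rewrite !modn_small ?ltn_Zn // => /val_inj ->.
  move: eq2; rewrite !modnMDl => /(modn_mulr_cancel coprime_n12).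
  by rewrite !modn_small ?ltn_Zn // => /val_inj ->.
move=> [a b] [c d]; rewrite /osum /= !cformE !gE.
rewrite -(@cform_scale n1 n2 _ n2_gt0) -(@cform_scale n2 n1 _ n1_gt0).
rewrite [(n2 * n1)%N]mulnC -mulrDl -rmorphD; apply/qz_eq_frac => //.
rewrite -!modz_nat modzMmr mulrAC modzMmr.
apply/eqP; rewrite eqz_mod_dvd; apply/dvdzP.
by exists (q * (a%:Z * d%:Z + b%:Z * c%:Z)); rewrite !PoszD !PoszM; ring.
Qed.

Section SplitOffSimple.

Variables (n m : nat) (q e : int) (H : zmodType) (c : lform H).
Hypotheses (n_gt0 : (0 < n)%N) (m_gt0 : (0 < m)%N) (e_unit : e = 1 \/ e = -1).
Variables (f : Zn n -> Zn m * H) (g : Zn m * H -> Zn n).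
Hypotheses (fD : {morph f : x y / x + y}) (fK : cancel f g) (gK : cancel g f).
Hypothesis f_iso : forall x y, qz_eq (osum (cform m e) c (f x) (f y)) (cform n q x y).

(* f 1 = (a, u) and z represents f^-1 (1, 0), so that a z = 1 (mod m). *)
Let a := nat_of_ord (f (inZp 1)).1.
Let u := (f (inZp 1)).2.
Let z := nat_of_ord (g (inZp 1, 0)).
Let n' := (n %/ m)%N.

Lemma f_inZp k : f (inZp k) = (inZp (a * k), u *+ k).
Proof. by rewrite additive_Zn // pair_mulrn Zp_mulrn. Qed.

Lemma snd_f_inZp k : (f (inZp k)).2 = u *+ k.
Proof. by rewrite f_inZp. Qed.

Lemma f_inZp_z : f (inZp z) = (inZp 1, 0).
Proof. by rewrite valZpK gK. Qed.

Lemma coprime_az_m : coprime (a * z) m.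
Proof.
have : (a * z = 1 %[mod m])%N.
  by have := congr1 (fun p => nat_of_ord p.1) f_inZp_z; rewrite f_inZp /= prednK.
by rewrite -coprime_modl => ->; rewrite coprime_modl coprime1n.
Qed.

Lemma fst_f_inZp_eq0 k : ((f (inZp k)).1 == 0) = (m %| k)%N.
Proof.
have coprime_m_a : coprime m a.
  by move: coprime_az_m; rewrite coprime_sym coprimeMr => /andP [].
by rewrite f_inZp -val_eqE /= prednK // -/(dvdn m (a * k)) Gauss_dvdr.
Qed.

Lemma dvdn_m_n : (m %| n)%N.
Proof. by rewrite -fst_f_inZp_eq0 inZpn // (morph_add0 fD). Qed.

Lemma dvdn_n'_z : (n' %| z)%N.
Proof.
have f_zm : f (inZp (z * m)) = f 0.
  rewrite f_inZp mulnA (morph_add0 fD) mulrnA -snd_f_inZp f_inZp_z mul0rn.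
  by rewrite (eqP (_ : inZp (a * z * m) == 0)) // inZp_eq0 // dvdn_mull.
by move/(can_inj fK)/eqP: f_zm; rewrite inZp_eq0 // -(divnK dvdn_m_n) dvdn_pmul2r.
Qed.

Lemma n_factor : n = (m * n')%N.
Proof. by rewrite mulnC divnK // dvdn_m_n. Qed.

Lemma n'_gt0 : (0 < n')%N.
Proof. by move: n_gt0; rewrite n_factor muln_gt0 => /andP []. Qed.

Let t := (z %/ n')%N.

Lemma z_factor : z = (t * n')%N.
Proof. by rewrite divnK // dvdn_n'_z. Qed.

Lemma coprime_t_m : coprime t m.
Proof. by move: coprime_az_m; rewrite z_factor !coprimeMl => /and3P []. Qed.

Lemma coprime_m_n' : coprime m n'.
Proof.
by move: coprime_az_m; rewrite z_factor !coprimeMl => /and3P [_ _]; rewrite coprime_sym.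
Qed.

(* c is not assumed to be bilinear: c 0 0 is an integer only because f 0 = 0. *)
Lemma qz_c00 : qz_eq (c 0 0) 0.
Proof.
by have := f_iso 0 0; rewrite (morph_add0 fD) /osum /= !cform0l add0r.
Qed.

Lemma simple_cofactor : simple_form (cform m (q * n'%:Z)).
Proof.
have := f_iso (g (inZp 1, 0)) (g (inZp 1, 0)); rewrite gK /osum /=.
move/qz_addr_cancel/(_ qz_c00); rewrite !cformE -/z z_factor n_factor.
rewrite (_ : q * _ * _ = q * n'%:Z * t%:Z * t%:Z * n'%:Z); last by rewrite !PoszM; ring.
rewrite cform_scale ?n'_gt0 // => /(qz_eq_frac _ _ m_gt0).
rewrite val_inZp // -modz_nat modzMmr mulr1 modzMmr !mulr1 => hq.
exists m, e; do 2!split=> //; apply/iso_sym/(cform_mulrn_iso m_gt0 coprime_t_m).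
by rewrite hq.
Qed.

Lemma f_inZp_mul_m k : f (inZp (m * k)) = (0, u *+ (m * k)).
Proof. by rewrite f_inZp; congr pair; apply/eqP; rewrite inZp_eq0 // mulnCA dvdn_mulr. Qed.

Lemma mulrn_u_modn k : u *+ (k %% n) = u *+ k.
Proof.
have u_n : u *+ n = 0.
  by rewrite -snd_f_inZp inZpn // (morph_add0 fD).
by rewrite [in RHS](divn_eq k n) mulrnDr mulnC mulrnA u_n mul0rn add0r.
Qed.

Lemma mulrn_u_modn' k : u *+ (m * (k %% n')) = u *+ (m * k).
Proof. by rewrite muln_modr -n_factor mulrn_u_modn. Qed.

Lemma mul_m_ltn (j : Zn n') : (m * j < n)%N.
Proof. by rewrite n_factor ltn_pmul2l // (ltn_Zn n'_gt0). Qed.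

(* f maps m Z_n onto 0 x H, and phi is the second component of f on m Z_n. *)
Let phi (j : Zn n') : H := u *+ (m * j).
Let psi (h : H) : Zn n' := inZp (g (0, h) %/ m).

Lemma phi_additive : {morph phi : x y / x + y}.
Proof.
by move=> x y; rewrite /phi val_addZn ?n'_gt0 // mulrn_u_modn' mulnDr mulrnDr.
Qed.

Lemma phiK : cancel phi psi.
Proof.
move=> j; rewrite /psi /phi -f_inZp_mul_m fK -[RHS]valZpK; congr inZp.
by rewrite val_inZp // (modn_small (mul_m_ltn j)) mulKn.
Qed.

Lemma psiK : cancel psi phi.
Proof.
move=> h; rewrite /psi /phi val_inZp ?n'_gt0 // mulrn_u_modn'.
have f_x : f (inZp (g (0, h))) = (0, h) by rewrite valZpK gK.
have /eqP := congr1 fst f_x; rewrite fst_f_inZp_eq0 => /divnK.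
by rewrite mulnC => ->; rewrite -snd_f_inZp f_x.
Qed.

Lemma complement_iso : form_iso (cform n' (q * m%:Z)) c.
Proof.
exists phi; split; first exact: phi_additive.
split; first by exists psi; [apply: phiK | apply: psiK].
move=> x y; have := f_iso (inZp (m * x)) (inZp (m * y)).
rewrite !f_inZp_mul_m /osum /= cform0l add0r !cformE !val_inZp //.
rewrite !modn_small ?mul_m_ltn // n_factor [(m * n')%N]mulnC.
have -> : q * (m * x)%N%:Z * (m * y)%N%:Z = q * m%:Z * x%:Z * y%:Z * m%:Z.
  by rewrite !PoszM; ring.
by rewrite cform_scale.
Qed.

End SplitOffSimple.

Lemma cform_split_simple n m (q e : int) (H : zmodType) (c : lform H) :
  (0 < n)%N -> (0 < m)%N -> (e = 1 \/ e = -1) ->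
  form_iso (cform n q) (osum (cform m e) c) ->
  [/\ n = (m * (n %/ m))%N, coprime m (n %/ m),
    simple_form (cform m (q * (n %/ m)%N%:Z)) & form_iso (cform (n %/ m) (q * m%:Z)) c].
Proof.
move=> n_gt0 m_gt0 e_unit [f [fD [[g fK gK] f_iso]]]; split.
- exact: n_factor gK.
- exact: coprime_m_n' fK gK.
- exact: simple_cofactor fK gK f_iso.
- exact: complement_iso fK gK f_iso.
Qed.

(** * Semisimple forms *)

Lemma dvdn_prod_seq (s : seq nat) d : d \in s -> (d %| \prod_(i <- s) i)%N.
Proof. by move=> d_in_s; rewrite (big_rem _ d_in_s) dvdn_mulr. Qed.

Lemma coprime_prod_seq m (s : seq nat) : all (coprime m) s -> coprime m (\prod_(i <- s) i).
Proof.
move=> /allP coprime_ms; rewrite big_seq.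
apply: (big_ind (coprime m)) => [|x y|x /coprime_ms] //; first exact: coprimen1.
by rewrite coprimeMr => -> ->.
Qed.

Lemma cform1_iso q q' : form_iso (cform 1 q) (cform 1 q').
Proof.
exists id; split=> //; split; first by exists id.
move=> x y; have val0 (v : Zn 1) : nat_of_ord v = 0%N by case: v => [[]].
by rewrite /qz_eq /cform !val0 !mulr0 !mul0r subrr.
Qed.

Definition simple_factorization n q (s : seq nat) :=
  [/\ (\prod_(ni <- s) ni)%N = n, pairwise coprime s &
      forall ni, ni \in s -> simple_form (cform ni (q * (n %/ ni)%N%:Z))].

Lemma simple_factorization_cons n q m s : (0 < n)%N ->
  let n' := (\prod_(i <- s) i)%N in
  simple_factorization n q (m :: s) <->
  [/\ n = (m * n')%N, coprime m n', simple_form (cform m (q * n'%:Z))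
    & simple_factorization n' (q * m%:Z) s].
Proof.
move=> n_gt0 n'; rewrite /simple_factorization big_cons /= -/n'.
have cofactor ni : ni \in s -> (q * (m * n' %/ ni)%N%:Z = q * m%:Z * (n' %/ ni)%N%:Z).
  by move=> ni_in_s; rewrite -muln_divA ?dvdn_prod_seq // PoszM mulrA.
split=> [[n_eq /andP [coprime_ms pw] simple_s] | [n_eq coprime_mn' simple_m [_ pw simple_s]]];
  subst n; have m_gt0 : (0 < m)%N by move: n_gt0; rewrite muln_gt0 => /andP [].
- split=> //; first exact: coprime_prod_seq.
    by have := simple_s m (mem_head _ _); rewrite mulKn.
  by split=> // ni ni_in_s; rewrite -cofactor //; apply: simple_s; rewrite in_cons ni_in_s orbT.
- split=> //.
    rewrite pw andbT; apply/allP => ni ni_in_s.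
    exact: coprime_dvdr (dvdn_prod_seq ni_in_s) coprime_mn'.
  move=> ni; rewrite in_cons => /orP [/eqP -> | ni_in_s]; first by rewrite mulKn.
  by rewrite cofactor //; apply: simple_s.
Qed.

Lemma semisimple_simple_factorization (G : zmodType) (b : lform G) :
  semisimple_form b -> forall n q, (0 < n)%N -> form_iso (cform n q) b ->
  exists s, simple_factorization n q s.
Proof.
elim=> [G' b' b'_triv | G' H1 H2 b' c1 c2 [m [e [m_gt0 [e_unit c1_iso]]]] _ IHc2 b'_iso]
  n q n_gt0 iso.
  have n1 := iso_card_Zn n_gt0 (ltn0Sn 0) (iso_trans iso b'_triv); subst n.
  by exists [::]; split=> //; rewrite big_nil.
have split_iso : form_iso (cform n q) (osum (cform m e) c2).
  exact: iso_trans iso (iso_trans b'_iso (iso_osum c1_iso (iso_refl c2))).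
have [n_eq coprime_mn' simple_m c2_iso] := cform_split_simple n_gt0 m_gt0 e_unit split_iso.
have n'_gt0 : (0 < n %/ m)%N by move: n_gt0; rewrite {1}n_eq muln_gt0 => /andP [].
have [s [prod_s pw simple_s]] := IHc2 _ _ n'_gt0 c2_iso.
exists (m :: s); apply/simple_factorization_cons => //; rewrite prod_s.
by split=> //; split.
Qed.

Lemma simple_factorization_semisimple s : forall n q, (0 < n)%N ->
  simple_factorization n q s -> semisimple_form (cform n q).
Proof.
elim: s => [|m s IHs] n q n_gt0.
  by move=> [prod_s _ _]; rewrite big_nil in prod_s; subst n; apply/ss_nil/cform1_iso.
move/(simple_factorization_cons _ _ _ n_gt0) => [n_eq coprime_mn' simple_m fact_s].
set n' := (\prod_(i <- s) i)%N in n_eq coprime_mn' simple_m fact_s.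
have [m_gt0 n'_gt0] : (0 < m)%N /\ (0 < n')%N.
  by move: n_gt0; rewrite n_eq muln_gt0 => /andP [].
subst n; apply: semisimple_iso (iso_sym (cform_crt_iso q m_gt0 n'_gt0 coprime_mn')) _.
exact: ss_cons simple_m (IHs _ _ n'_gt0 fact_s) (iso_refl _).
Qed.

Theorem proposition1p7 (n : nat) (q : int) :
  (0 < n)%N -> coprimez q n%:Z ->
  (simple_form (cform n q) <->
     exists k : int, (q = k ^+ 2 %[mod n%:Z])%Z \/ (q = - k ^+ 2 %[mod n%:Z])%Z)
  /\
  (semisimple_form (cform n q) <->
     exists s : seq nat,
       [/\ (\prod_(ni <- s) ni)%N = n,
           pairwise coprime s &
           forall ni, ni \in s -> simple_form (cform ni (q * (n %/ ni)%N%:Z))]).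
Proof.
move=> n_gt0 coprime_qn; split; first exact: simple_cformP.
split=> [ss | [s fact_s]].
- exact: semisimple_simple_factorization ss n q n_gt0 (iso_refl _).
- exact: simple_factorization_semisimple fact_s.
Qed.
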